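(* Let $V \subseteq \mathbb{R}^7$ be a linear subspace, let $V\lrcorner\varphi = \{v\lrcorner\varphi : v\in V\}$ and $\Lambda^2(V) = \mathrm{Span}\{u\wedge v : u,v\in V\}$, both subspaces of $\Lambda^2(\mathbb{R}^7)$. Then: - if $V = \mathbb{R}^7$, then $\Lambda^2(V)\cap(V\lrcorner\varphi) = \Lambda^2_7$; - if $V$ is a proper subspace, then $\Lambda^2(V)\cap(V\lrcorner\varphi) = \{0\}$.
   Context: Equip $\mathbb{R}^7$ with its standard inner product and basis. Let $\varphi = e_{123} - e_{167} - e_{527} - e_{563} - e_{415} - e_{426} - e_{437}$ ($e_{ijk} = e_i\wedge e_j\wedge e_k$). For $u,v$: $u\wedge v$ is the 2-form $(a,b)\mapsto \langle u,a\rangle\langle v,b\rangle - \langle u,b\rangle\langle v,a\rangle$; $u\lrcorner\varphi$ is the 2-form $(a,b)\mapsto\varphi(u,a,b)$. $\Lambda^2_7 = \{u\lrcorner\varphi : u\in\mathbb{R}^7\}$. *)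

(* Vectors of R^7 are row vectors 'rV[R]_7 (e_1..e_7 are the
   unit rows delta_mx 0 0 .. delta_mx 0 6).  A 2-form omega on R^7 is represented
   by its (antisymmetric) Gram matrix M : 'M[R]_7, i.e. omega(a,b) = a M b^T. *)
From HB Require Import structures.
From mathcomp Require Import all_boot all_order all_algebra.
From mathcomp Require Import reals.
Set Implicit Arguments. Unset Strict Implicit. Unset Printing Implicit Defensive.
Import Order.TTheory GRing.Theory Num.Theory.
Local Open Scope ring_scope.

Section G2.
Variable R : realType.

Definition coord7 (a : 'rV[R]_7) (i : nat) : R := a ord0 (inord i.-1).

Definition e3 (i j k : nat) (a b c : 'rV[R]_7) : R :=
  coord7 a i * (coord7 b j * coord7 c k - coord7 b k * coord7 c j)
  - coord7 a j * (coord7 b i * coord7 c k - coord7 b k * coord7 c i)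
  + coord7 a k * (coord7 b i * coord7 c j - coord7 b j * coord7 c i).

Definition phi (a b c : 'rV[R]_7) : R :=
  e3 1 2 3 a b c - e3 1 6 7 a b c - e3 5 2 7 a b c - e3 5 6 3 a b c
  - e3 4 1 5 a b c - e3 4 2 6 a b c - e3 4 3 7 a b c.

Definition form_of (M : 'M[R]_7) (a b : 'rV[R]_7) : R := (a *m M *m b^T) ord0 ord0.

Definition wedge (u v : 'rV[R]_7) : 'M[R]_7 := u^T *m v - v^T *m u.

Definition hook (u : 'rV[R]_7) : 'M[R]_7 :=
  \matrix_(i < 7, j < 7) phi u (delta_mx ord0 i) (delta_mx ord0 j).

Definition Lambda2 (V : {vspace 'rV[R]_7}) (M : 'M[R]_7) : Prop :=
  exists n (c : 'I_n -> R) (u w : 'I_n -> 'rV[R]_7),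
    (forall k, u k \in V /\ w k \in V) /\ M = \sum_(k < n) c k *: wedge (u k) (w k).

Definition hookV (V : {vspace 'rV[R]_7}) (M : 'M[R]_7) : Prop :=
  exists2 v, v \in V & M = hook v.

Definition Lambda2_7 (M : 'M[R]_7) : Prop := exists u, M = hook u.

End G2.

From HB Require Import structures.
From mathcomp Require Import all_boot all_order all_algebra.
From mathcomp Require Import reals ring zify.
Import Order.TTheory GRing.Theory Num.Theory.
Local Open Scope ring_scope.

(* For V = R^7, Lambda^2(V) consists of all skew forms, and every u _| phi is skew.
   For a proper V pick w <> 0 orthogonal to V.  Every form in Lambda^2(V) annihilates w,
   so if v _| phi lies in Lambda^2(V) with v in V, then phi(v, e_i, w) = 0 for all i.
   The norm identity of the 7-dimensional cross product,
   sum_i phi(v, e_i, w)^2 = |v|^2 |w|^2 - <v, w>^2, together with <v, w> = 0 forces v = 0. *)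

Lemma vspace_orthogonal_nonzero {F : fieldType} {n} {V : {vspace 'rV[F]_n}} :
  V != fullv -> exists2 w : 'rV_n, w != 0 & forall u, u \in V -> u *m w^T = 0.
Proof.
move=> V_proper; pose d := \dim V.
pose B : 'M[F]_(n, d) := \matrix_(j, i) (vbasis V)`_i 0 j.
pose f : 'Hom('rV[F]_n, 'rV[F]_d) := linfun (mulmxr B).
have ker_nz : lker f != 0%VS.
  have lt_dn : (d < n)%N.
    by rewrite ltnNge; apply: contra V_proper => ?; rewrite eqEdim subvf dimvf /dim /= mul1n.
  have dim_img : (\dim (f @: fullv) <= d)%N.
    by rewrite -[X in (_ <= X)%N]mul1n -[(1 * d)%N]/(dim 'rV[F]_d) -dimvf dimvS ?subvf.
  have := limg_ker_dim f fullv; rewrite capfv dimvf /dim /= mul1n -dimv_eq0; lia.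
set w := vpick (lker f); exists w; first by rewrite vpick0.
have wB0 : w *m B = 0 by apply/eqP; have := memv_pick (lker f); rewrite memv_ker lfunE.
have basis_orth (i : 'I_d) : (vbasis V)`_i *m w^T = 0.
  apply/rowP => k; have := congr1 (fun M : 'M_(1, d) => M 0 i) wB0.
  rewrite ord1 !mxE => wBi0; rewrite -[in RHS]wBi0.
  by apply: eq_bigr => j _; rewrite !mxE mulrC.
move=> u /coord_vbasis ->; rewrite mulmx_suml big1 // => i _.
by rewrite -scalemxAl basis_orth scaler0.
Qed.

Definition dot {R : pzRingType} {n} (a b : 'rV[R]_n) : R := (a *m b^T) 0 0.

Lemma dot_self_eq0 (R : realDomainType) n (a : 'rV[R]_n) : (dot a a == 0) = (a == 0).
Proof.
rewrite /dot mxE psumr_eq0 => [|j _]; last by rewrite mxE -expr2 sqr_ge0.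
apply/allP/eqP => [a0 | -> j _]; last by rewrite mxE mul0r eqxx.
apply/rowP => j; have := a0 j (mem_index_enum j).
by rewrite mxE -expr2 sqrf_eq0 mxE => /eqP.
Qed.

Lemma sum_ord7 (V : nmodType) (F : 'I_7 -> V) : \sum_(i < 7) F i =
  F (inord 0) + F (inord 1) + F (inord 2) + F (inord 3) + F (inord 4) + F (inord 5) + F (inord 6).
Proof.
rewrite !big_ord_recl big_ord0 addr0 !addrA.
by repeat congr (_ + _); congr F; apply: ord_inj; rewrite inordK.
Qed.

Section G2Form.
Context {R : realType}.
Implicit Types (u v w a b c : 'rV[R]_7) (M : 'M[R]_7).

Lemma coord7_delta m k : (m < 7)%N -> (0 < k <= 7)%N ->
  coord7 (delta_mx 0 (inord m) : 'rV[R]_7) k = (m.+1 == k)%:R.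
Proof.
case: k => // k lt_m7 lt_k7.
by rewrite /coord7 mxE eqxx -(inj_eq (@ord_inj 7)) !inordK // eqSS eq_sym.
Qed.

(* Rewriting whole [e3] blocks, with nat equalities that [/=] decides, keeps the
   expansion in [sum_sqr_phi] fast; rewriting [coord7_delta] in place is much slower. *)
Lemma e3_delta_mid i j k m a c :
    (m < 7)%N -> (0 < i <= 7)%N -> (0 < j <= 7)%N -> (0 < k <= 7)%N ->
  e3 i j k a (delta_mx 0 (inord m)) c =
    coord7 a i * ((m.+1 == j)%:R * coord7 c k - (m.+1 == k)%:R * coord7 c j)
  - coord7 a j * ((m.+1 == i)%:R * coord7 c k - (m.+1 == k)%:R * coord7 c i)
  + coord7 a k * ((m.+1 == i)%:R * coord7 c j - (m.+1 == j)%:R * coord7 c i).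
Proof. by move=> *; rewrite /e3 !coord7_delta. Qed.

Lemma phi_linear a b : linear (phi a b : 'rV_7 -> R^o).
Proof. by move=> x c d; rewrite /phi /e3 /coord7 !mxE /GRing.scale /=; ring. Qed.

HB.instance Definition _ a b :=
  GRing.isLinear.Build R 'rV[R]_7 R^o _ (phi a b) (phi_linear a b).

Lemma phi_sum_delta a b c : phi a b c = \sum_j c 0 j * phi a b (delta_mx 0 j).
Proof. by rewrite {1}[c]row_sum_delta linear_sum; apply: eq_bigr => j _; rewrite linearZ. Qed.

Lemma sum_sqr_phi v w :
  \sum_i phi v (delta_mx 0 i) w ^+ 2 = dot v v * dot w w - dot v w ^+ 2.
Proof.
by rewrite sum_ord7 /phi !e3_delta_mid //= /dot !mxE !sum_ord7 !mxE /coord7 /=; ring.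
Qed.

Lemma hook0 : hook (0 : 'rV[R]_7) = 0.
Proof. by apply/matrixP => i j; rewrite !mxE /phi /e3 /coord7 !mxE; ring. Qed.

Lemma hook_skew u i j : hook u j i = - hook u i j.
Proof. by rewrite !mxE /phi /e3; ring. Qed.

Lemma hook_mul_tr v w i : (hook v *m w^T) i 0 = phi v (delta_mx 0 i) w.
Proof. by rewrite mxE phi_sum_delta; apply: eq_bigr => j _; rewrite !mxE mulrC. Qed.

Lemma hook_mul_orth_eq0 {v w : 'rV[R]_7} :
  w != 0 -> v *m w^T = 0 -> hook v *m w^T = 0 -> v = 0.
Proof.
move=> w_nz vw hvw; have dot_vw : dot v w = 0 by rewrite /dot vw mxE.
have := sum_sqr_phi v w; rewrite dot_vw expr0n subr0.
rewrite big1 => [|i _]; last by rewrite -hook_mul_tr hvw mxE expr0n.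
move/esym/eqP; rewrite mulf_eq0 !dot_self_eq0 (negbTE w_nz) orbF.
exact/eqP.
Qed.

Lemma wedgeE u v i j : wedge u v i j = u 0 i * v 0 j - v 0 i * u 0 j.
Proof. by rewrite !mxE !big_ord1 !mxE. Qed.

Lemma skew_sum_wedge M : (forall i j, M j i = - M i j) ->
  M = \sum_k 2^-1 *: wedge (delta_mx 0 k) (row k M).
Proof.
move=> M_skew; apply/matrixP => i j; rewrite summxE.
under eq_bigr => k _ do rewrite mxE wedgeE !mxE /= mulrBr.
rewrite sumrB (bigD1 i) //= big1 => [|k ne_ki]; last first.
  by rewrite eq_sym (negbTE ne_ki) mul0r !mulr0.
rewrite [X in _ - X](bigD1 j) //= [X in _ - (_ + X)]big1 => [|k ne_kj]; last first.
  by rewrite eq_sym (negbTE ne_kj) !mulr0.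
by rewrite !eqxx /= M_skew; field.
Qed.

Lemma Lambda2_0 (V : {vspace 'rV[R]_7}) : Lambda2 V 0.
Proof. by exists 0%N, (fun=> 0), (fun=> 0), (fun=> 0); split=> [[]|]; rewrite ?big_ord0. Qed.

Lemma Lambda2_fullv_skew M : (forall i j, M j i = - M i j) -> Lambda2 fullv M.
Proof.
move=> M_skew; exists 7%N, (fun=> 2^-1), (fun k => delta_mx 0 k), (fun k => row k M).
by split=> [k|]; [rewrite !memvf | exact: skew_sum_wedge].
Qed.

Lemma Lambda2_mul_orth (V : {vspace 'rV[R]_7}) M w :
  (forall u, u \in V -> u *m w^T = 0) -> Lambda2 V M -> M *m w^T = 0.
Proof.
move=> V_orth [n [c [u [u' [uV ->]]]]]; rewrite mulmx_suml big1 // => k _.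
have [/V_orth uw /V_orth u'w] := uV k.
by rewrite -scalemxAl /wedge mulmxBl -!mulmxA uw u'w !mulmx0 subrr scaler0.
Qed.

End G2Form.

Theorem lemma4p10 (R : realType) (V : {vspace 'rV[R]_7}) :
  (V = fullv ->
     forall M : 'M[R]_7, (Lambda2 V M /\ hookV V M) <-> Lambda2_7 M) /\
  (V != fullv ->
     forall M : 'M[R]_7, (Lambda2 V M /\ hookV V M) <-> M = 0).
Proof.
split=> [-> M | V_proper M]; split.
- by case=> _ [v _ ->]; exists v.
- case=> u ->; split; last by exists u; rewrite ?memvf.
  exact/Lambda2_fullv_skew/hook_skew.
- case=> M_Lambda2 [v vV M_hook].
  have [w w_nz V_orth] := vspace_orthogonal_nonzero V_proper.
  have hook_vw : hook v *m w^T = 0 by rewrite -M_hook; exact: Lambda2_mul_orth M_Lambda2.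
  by rewrite M_hook (hook_mul_orth_eq0 w_nz (V_orth v vV) hook_vw) hook0.
- by move=> ->; split; [exact: Lambda2_0 | exists 0; rewrite ?mem0v ?hook0].
Qed.
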